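(* Let $E$ be a finite set and let $\mathcal{W}\subseteq\{+,-,0\}^E$ satisfy (A1), (A2), (A3). Let $N_1,N_2\in\mathcal{P}(\mathcal{W})$ with $\underline{N_1}=\underline{N_2}$ and $N_1\neq N_2$, where $N_1=U+(-U')$ for some $U,U'\in\mathrm{asym}(\mathcal{W})$ with $\underline{U}=\underline{U'}$ and $I(U,-U')\cap\mathcal{W}=I(-U,U')\cap\mathcal{W}=\emptyset$. Let $V=(-N_2)\circ U$. Then the pair $(X,Y)=(U,V)$ does not satisfy all the conditions in the definition of $\mathcal{P}(\mathcal{W})$, i.e. it does not witness that $U+(-V)\in\mathcal{P}(\mathcal{W})$.
   Context: For $X\in\{+,-,0\}^E$: $X^+=\{e:X_e=+\}$, $X^-=\{e:X_e=-\}$, support $\underline{X}=X^+\cup X^-$; $(-X)_e=-X_e$; composition $(X\circ Y)_e=X_e$ if $X_e\neq0$, else $Y_e$; $S(X,Y)=(X^+\cap Y^-)\cup(X^-\cap Y^+)$; $\mathcal{A}\circ\mathcal{B}=\{A\circ B\}$. For $X,Y$ with $\underline{X}=\underline{Y}$, $X\neq Y$, $e\in S(X,Y)$: $I_e(X,Y)=\{V : \underline{V}\subseteq\underline{X}\setminus\{e\}, V_f=X_f\ \forall f\notin S(X,Y)\}$, $I(X,Y)=\bigcup_{e\in S(X,Y)}I_e(X,Y)$. Sum: $(X+Y)_e=0$ if $e\in S(X,Y)$, else $(X\circ Y)_e$. $\mathrm{asym}(\mathcal{W})=\{V\in\mathcal{W}:-V\notin\mathcal{W}\}$; $\mathcal{P}(\mathcal{W})=\{X+(-Y):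 X,Y\in\mathrm{asym}(\mathcal{W}), \underline{X}=\underline{Y}, I(X,-Y)\cap\mathcal{W}=I(-X,Y)\cap\mathcal{W}=\emptyset\}$; a pair $(X,Y)$ witnesses $X+(-Y)\in\mathcal{P}(\mathcal{W})$ if it satisfies all these conditions. Axioms: (A1) $X,Y\in\mathcal{W}\Rightarrow X\circ Y\in\mathcal{W}$ and $X\circ(-Y)\in\mathcal{W}$; (A2) if $X,Y\in\mathcal{W}$ with $\underline{X}=\underline{Y}$ then $I_e(X,Y)\cap\mathcal{W}\neq\emptyset$ for every $e\in S(X,Y)$; (A3) $\mathcal{P}(\mathcal{W})\circ\mathcal{W}\subseteq\mathcal{W}$. *)

From HB Require Import structures.
From mathcomp Require Import all_boot.
Set Implicit Arguments. Unset Strict Implicit. Unset Printing Implicit Defensive.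

Inductive sgn := SP | SM | S0.

Definition sgn_eqb (a b : sgn) : bool :=
  match a, b with SP, SP | SM, SM | S0, S0 => true | _, _ => false end.
Lemma sgn_eqP : Equality.axiom sgn_eqb.
Proof. by case; case; constructor. Qed.
HB.instance Definition _ := hasDecEq.Build sgn sgn_eqP.

Definition sopp (a : sgn) : sgn := match a with SP => SM | SM => SP | S0 => S0 end.

Section SignVectors.
Variable E : finType.
Notation vec := {ffun E -> sgn}.

Definition posp (X : vec) : {set E} := [set e | X e == SP].
Definition negp (X : vec) : {set E} := [set e | X e == SM].
Definition supp (X : vec) : {set E} := posp X :|: negp X.
Definition vopp (X : vec) : vec := [ffun e => sopp (X e)].
Definition vcomp (X Y : vec) : vec := [ffun e => if X e != S0 then X e else Y e].
Definition sepset (X Y : vec) : {set E} :=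
  (posp X :&: negp Y) :|: (negp X :&: posp Y).
Definition Ie (X Y : vec) (e : E) (V : vec) : Prop :=
  supp V \subset supp X :\ e /\ (forall f, f \notin sepset X Y -> V f = X f).
Definition Iset (X Y : vec) (V : vec) : Prop :=
  exists2 e, e \in sepset X Y & Ie X Y e V.
Definition vsum (X Y : vec) : vec :=
  [ffun e => if e \in sepset X Y then S0 else vcomp X Y e].

Variable W : vec -> Prop.
Definition asym (V : vec) : Prop := W V /\ ~ W (vopp V).
Definition witnesses (X Y : vec) : Prop :=
  [/\ asym X, asym Y, supp X = supp Y,
      (forall V, Iset X (vopp Y) V -> ~ W V) &
      (forall V, Iset (vopp X) Y V -> ~ W V)].
Definition inP (N : vec) : Prop :=
  exists X Y, witnesses X Y /\ N = vsum X (vopp Y).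

Definition A1 : Prop := forall X Y, W X -> W Y -> W (vcomp X Y) /\ W (vcomp X (vopp Y)).
Definition A2 : Prop := forall X Y, W X -> W Y -> supp X = supp Y ->
  forall e, e \in sepset X Y -> exists V, Ie X Y e V /\ W V.
Definition A3 : Prop := forall N Z, inP N -> W Z -> W (vcomp N Z).
End SignVectors.

(* Write -V = N2 o (-U) and Z = N2 o U.  Z lies in W by (A3), and it has the
   support of U because supp N2 = supp N1 is contained in supp U.  As N1 and N2
   have the same support but differ, they have opposite signs at some f; there
   N1 agrees with U, so f separates U from Z and (A2) yields T in I_f(U,Z) in W.
   Outside supp N2 the vector -V is -U, so S(U,Z) is contained in S(U,-V);
   hence T lies in I(U,-V) as well, which a witness (U,V) forbids. *)
From mathcomp Require Import all_boot.

Set Implicit Arguments.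
Unset Strict Implicit.
Unset Printing Implicit Defensive.

Section SignVectorCalculus.
Variable E : finType.
Implicit Types (X Y Z N : {ffun E -> sgn}) (e : E).

Lemma in_supp X e : (e \in supp X) = (X e != S0).
Proof. by rewrite !inE; case: (X e). Qed.

Lemma in_sepset X Y e : (e \in sepset X Y) =
  [|| (X e == SP) && (Y e == SM) | (X e == SM) && (Y e == SP)].
Proof. by rewrite !inE. Qed.

Lemma vopp_vcomp X Y : vopp (vcomp X Y) = vcomp (vopp X) (vopp Y).
Proof. by apply/ffunP => e; rewrite !ffunE; case: (X e). Qed.

Lemma vopp_vopp X : vopp (vopp X) = X.
Proof. by apply/ffunP => e; rewrite !ffunE; case: (X e). Qed.

Lemma supp_vopp X : supp (vopp X) = supp X.
Proof. by apply/setP => e; rewrite !in_supp ffunE; case: (X e). Qed.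

Lemma supp_vcomp X Y : supp (vcomp X Y) = supp X :|: supp Y.
Proof. by apply/setP => e; rewrite in_setU !in_supp ffunE; case: (X e). Qed.

Lemma supp_vsum_sub X Y : supp (vsum X Y) \subset supp X :|: supp Y.
Proof.
by apply/subsetP => e; rewrite in_setU !in_supp !ffunE; case: (_ \in _); case: (X e).
Qed.

Lemma sepset_vsumL X Y Z :
  supp Y \subset supp X -> sepset (vsum X Y) Z \subset sepset X Z.
Proof.
move=> /subsetP sYX; apply/subsetP => e; rewrite !in_sepset !ffunE.
case: (e \in sepset X Y) => //; move: (sYX e); rewrite !in_supp.
by case: (X e); case: (Y e); case: (Z e); rewrite //= => /(_ isT).
Qed.

Lemma sepset_vcomp_self X N : sepset X (vcomp N X) = sepset X N.
Proof.
by apply/setP => e; rewrite !in_sepset ffunE; case: (X e); case: (N e).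
Qed.

Lemma sepset_sub_vcomp X N Y : sepset X N \subset sepset X (vcomp N Y).
Proof.
by apply/subsetP => e; rewrite !in_sepset ffunE; case: (X e); case: (N e).
Qed.

Lemma Ie_sepset_sub X Y Y' e V :
  sepset X Y \subset sepset X Y' -> Ie X Y e V -> Ie X Y' e V.
Proof.
move=> /subsetP sYY' [suppV agree]; split=> // f fY'.
by apply: agree; apply: contra fY'; apply: sYY'.
Qed.

Lemma sepset_supp_eq X Y :
  supp X = supp Y -> X <> Y -> exists f, f \in sepset X Y.
Proof.
move=> sXY neXY; case: (pickP (mem (sepset X Y))) => [f fXY | noSep].
  by exists f.
case: neXY; apply/ffunP => e.
move: (noSep e) sXY => /= + /setP/(_ e); rewrite in_sepset !in_supp.
by case: (X e); case: (Y e).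
Qed.

End SignVectorCalculus.

Theorem lemma4p1 (E : finType) (W : {ffun E -> sgn} -> Prop) :
  A1 W -> A2 W -> A3 W ->
  forall N1 N2 U U' : {ffun E -> sgn},
    inP W N1 -> inP W N2 -> supp N1 = supp N2 -> N1 <> N2 ->
    witnesses W U U' -> N1 = vsum U (vopp U') ->
    ~ witnesses W U (vcomp (vopp N2) U).
Proof.
move=> _ A2W A3W N1 N2 U U' _ N2P suppN neN [[WU _] _ suppU _ _] defN1.
case=> _ _ _ noI _.
set Z := vcomp N2 U.
have suppU'U : supp (vopp U') \subset supp U by rewrite supp_vopp suppU.
have suppN2 : supp N2 \subset supp U.
  by rewrite -suppN defN1; apply: subset_trans (supp_vsum_sub _ _) _;
     rewrite subUset subxx.
have suppZ : supp U = supp Z by rewrite supp_vcomp; exact/esym/setUidPr.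
have [f fN] := sepset_supp_eq suppN neN.
have fZ : f \in sepset U Z.
  by rewrite sepset_vcomp_self; move: f fN; rewrite defN1; apply/subsetP/sepset_vsumL.
have [T [IT WT]] := A2W _ _ WU (A3W _ _ N2P WU) suppZ f fZ.
have sepZ : sepset U Z \subset sepset U (vopp (vcomp (vopp N2) U)).
  by rewrite vopp_vcomp vopp_vopp sepset_vcomp_self sepset_sub_vcomp.
apply: (noI T) WT; exists f; first exact: subsetP sepZ _ fZ.
exact: Ie_sepset_sub sepZ IT.
Qed.
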